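(* Let $S=(G,-1,q)$ be a quaternionic structure with abstract 2-Brauer group $B=B(S)$. Then: (a) $B$ is a boolean group (every element is its own inverse) whose neutral element is $0=q(1,1)$. (b) For all $\alpha\in\mathbb N_0$ and $a,b\in G$, $q(a^\alpha,b)=q(a,b)^\alpha=q(a,b^\alpha)$ (powers taken in $B$). (c) If $S$ has finite order $n$, then $\dim_{\mathbb F_2}B\le\binom n2$ if $-1=1$, and $\dim_{\mathbb F_2}B\le\binom n2+1$ if $-1\neq1$.
   Context: A quaternionic structure is a triple $S=(G,-1,q)$ where $G$ is a multiplicative group in which every element is its own inverse (viewed as $\mathbb F_2$-vector space), $-1\in G$ is a distinguished element (possibly $-1=1$), $-a:=(-1)a$, and $q:G\times G\to Q$ is a surjective map onto a set $Q$ with distinguished element $0$, such that for all $a,b,c,d\in G$: (Q1) $q(a,-a)=0$; (Q2) $q(a,b)=q(b,a)$; (Q3) $q(a,b)=q(a,c)\iff q(a,bc)=0$; (Q4) $q(a,b)=q(c,d)\iff$ there is $x\in G$ with $q(a,b)=q(a,x)=q(c,x)=q(c,d)$. The order of $S$ is $\dim_{\mathbb F_2}G$. The abstract 2-Brauer group $B(S)$ is the abelian group, with operation written $\ast$, generated by the set $Q$ subject only to the relations $q(a,b)\ast q(a,c)=q(a,bc)$ for all $a,b,c\in G$ (the linkage relations). *)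

From mathcomp Require Import all_boot.
Set Implicit Arguments. Unset Strict Implicit. Unset Printing Implicit Defensive.

(* G is a multiplicative group in
   which every element is its own inverse (associativity, left identity,
   x*x = 1 give a group; commutativity follows).  q : G x G -> Q is
   surjective onto a set Q with distinguished element qzero. *)
Record qstruct := QStruct {
  qG : Type;
  qmul : qG -> qG -> qG;
  qone : qG;
  qm1 : qG;
  qQ : Type;
  qzero : qQ;
  q : qG -> qG -> qQ;
  qmulA : forall a b c, qmul a (qmul b c) = qmul (qmul a b) c;
  qmul1 : forall a, qmul qone a = a;
  qmulxx : forall a, qmul a a = qone;
  q_surj : forall x : qQ, exists a b, q a b = x;
  qQ1 : forall a, q a (qmul qm1 a) = qzero;
  qQ2 : forall a b, q a b = q b a;
  qQ3 : forall a b c, q a b = q a c <-> q a (qmul b c) = qzero;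
  qQ4 : forall a b c d, q a b = q c d <->
          exists x, [/\ q a b = q a x, q a x = q c x & q c x = q c d]
}.

Definition gexp (S : qstruct) (a : qG S) (n : nat) : qG S := iter n (qmul a) (qone S).

Definition gprod (S : qstruct) (l : seq (qG S)) : qG S := foldr (@qmul S) (qone S) l.

(* S has finite order n : G has an F_2-basis of n elements, i.e. a list s of
   length n such that every element of G is the product of exactly one
   sub-family of s. *)
Definition has_order (S : qstruct) (n : nat) : Prop :=
  exists s : seq (qG S), size s = n /\
    (forall g, exists m : bitseq, size m = n /\ g = gprod (mask m s)) /\
    (forall m1 m2 : bitseq, size m1 = n -> size m2 = n ->
        gprod (mask m1 s) = gprod (mask m2 s) -> m1 = m2).

(* Abstract 2-Brauer group B(S): the abelian group generated by Q subject only
   to the linkage relations.  Elements are represented by formal abelian-group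
   expressions in the generators; [beq S] is the congruence generated by the
   abelian group axioms and the linkage relations, so B(S) = bexpr / beq. *)
Inductive bexpr (Q : Type) : Type :=
| BGen of Q
| BZero
| BAdd of bexpr Q & bexpr Q
| BNeg of bexpr Q.
Arguments BZero {Q}.

Inductive beq (S : qstruct) : bexpr (qQ S) -> bexpr (qQ S) -> Prop :=
| beq_refl e : beq e e
| beq_sym e1 e2 : beq e1 e2 -> beq e2 e1
| beq_trans e1 e2 e3 : beq e1 e2 -> beq e2 e3 -> beq e1 e3
| beq_addc e1 e2 f1 f2 : beq e1 e2 -> beq f1 f2 -> beq (BAdd e1 f1) (BAdd e2 f2)
| beq_negc e1 e2 : beq e1 e2 -> beq (BNeg e1) (BNeg e2)
| beq_addA e1 e2 e3 : beq (BAdd e1 (BAdd e2 e3)) (BAdd (BAdd e1 e2) e3)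
| beq_addC e1 e2 : beq (BAdd e1 e2) (BAdd e2 e1)
| beq_add0 e : beq (BAdd BZero e) e
| beq_addN e : beq (BAdd (BNeg e) e) BZero
| beq_link a b c : beq (BAdd (BGen (q a b)) (BGen (q a c))) (BGen (q a (qmul b c))).

Arguments beq : clear implicits.

(* n-fold sum (the power x^n, written additively, in B) *)
Definition bmuln (Q : Type) (e : bexpr Q) (n : nat) : bexpr Q := iter n (BAdd e) BZero.

Definition bsum (Q : Type) (l : seq (bexpr Q)) : bexpr Q := foldr (@BAdd Q) BZero l.

(* dim_{F_2} B(S) <= N (for B(S) boolean): B(S) is spanned over F_2 by at most
   N elements, i.e. every element is the sum of a sub-family of them. *)
Definition bdim_le (S : qstruct) (N : nat) : Prop :=
  exists s : seq (bexpr (qQ S)), size s <= N /\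
    forall e, exists m : bitseq, beq S e (bsum (mask m s)).

(* The linkage relations make every generator q(a,b) biadditive: q(a,b) + q(a,c) = q(a,bc).
   Taking b = c gives q(a,b) + q(a,b) = q(a,1) = 0, so B is boolean, and iterating the
   linkage relation gives (b).  For (c), biadditivity shows that B is spanned by the
   values q(x,y) on a basis x_1, ..., x_n of G.  Since q(x,x) = q(x,-1) (from
   q(x,-x) = 0), the diagonal values vanish when -1 = 1, leaving the binom(n,2) values
   q(x_i,x_j) with i < j.  When -1 <> 1 we may take x_1 = -1; then q(x,x) = q(-1,x) for
   x <> -1 is already among the off-diagonal values, and only q(-1,-1) is added. *)

From Stdlib Require Import Setoid Morphisms.
From Stdlib Require List.
From mathcomp Require Import all_boot.

Set Implicit Arguments. Unset Strict Implicit. Unset Printing Implicit Defensive.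

#[export] Hint Resolve beq_refl : core.

#[export] Instance beq_Equivalence (S : qstruct) : Equivalence (beq S).
Proof. by split; [exact: beq_refl | exact: beq_sym | exact: beq_trans]. Qed.

#[export] Instance BAdd_Proper (S : qstruct) :
  Proper (beq S ==> beq S ==> beq S) (@BAdd (qQ S)).
Proof. by move=> ? ? ? ? ? ?; apply: beq_addc. Qed.

#[export] Instance BNeg_Proper (S : qstruct) : Proper (beq S ==> beq S) (@BNeg (qQ S)).
Proof. by move=> ? ? ?; apply: beq_negc. Qed.

Lemma In_mask (A : Type) (m : bitseq) (s : seq A) x :
  List.In x (mask m s) -> List.In x s.
Proof.
elim: s m => [|y s IHs] [|[] m] //= => [[->|/IHs] | /IHs]; by [left | right].
Qed.

Lemma mask_first (A : Type) (m : bitseq) (s : seq A) : mask m s <> [::] ->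
  exists s1 z s2 m2, s = s1 ++ z :: s2 /\ mask m s = z :: mask m2 s2.
Proof.
elim: s m => [|x s IHs] [|[] m] //= nz_mask; first by exists [::], x, s, m.
have [s1 [z [s2 [m2 [-> ->]]]]] := IHs _ nz_mask.
by exists (x :: s1), z, s2, m2.
Qed.

Section BrauerGroup.

Variable S : qstruct.
Local Notation G := (qG S).
Local Notation B := (bexpr (qQ S)).
Implicit Types (a b c x y : G) (e f : B) (l s : seq G) (T : seq B).

Lemma qmulr1 a : qmul a (qone S) = a.
Proof. by rewrite -(qmulxx a) qmulA qmulxx qmul1. Qed.

Lemma q_x1 a : q a (qone S) = qzero S.
Proof. by rewrite -(qmulxx a); apply/qQ3. Qed.

Lemma q_1x a : q (qone S) a = qzero S.
Proof. by rewrite qQ2 q_x1. Qed.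

Lemma beq_addr0 e : beq S (BAdd e BZero) e.
Proof. by rewrite beq_addC beq_add0. Qed.

Lemma beq_addACA e1 e2 e3 e4 :
  beq S (BAdd (BAdd e1 e2) (BAdd e3 e4)) (BAdd (BAdd e1 e3) (BAdd e2 e4)).
Proof.
by rewrite -beq_addA (beq_addA e2) (beq_addC e2 e3) -(beq_addA e3) beq_addA.
Qed.

Lemma beq_linkl a b c :
  beq S (BGen (q (qmul a b) c)) (BAdd (BGen (q a c)) (BGen (q b c))).
Proof. by rewrite qQ2 -beq_link (qQ2 c) (qQ2 c). Qed.

Lemma beq_qzero : beq S (BGen (qzero S)) BZero.
Proof.
set z := BGen (qzero S).
have zz : beq S (BAdd z z) z by rewrite /z -(q_x1 (qone S)) beq_link qmulxx.
by rewrite -(beq_add0 z) -(beq_addN z) -beq_addA zz.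
Qed.

Lemma beq_addss e : beq S (BAdd e e) BZero.
Proof.
elim: e => [x||e IHe f IHf|e IHe].
- have [a [b <-]] := q_surj x.
  by rewrite beq_link qmulxx q_x1 beq_qzero.
- exact: beq_add0.
- by rewrite beq_addACA IHe IHf beq_add0.
- have -> : beq S (BNeg e) e.
    by rewrite -(beq_addr0 (BNeg e)) -IHe beq_addA beq_addN beq_add0.
  exact: IHe.
Qed.

Lemma beq_negE e : beq S (BNeg e) e.
Proof.
by rewrite -(beq_addr0 (BNeg e)) -(beq_addss e) beq_addA beq_addN beq_add0.
Qed.

Lemma beq_add_eq0 e f : beq S (BAdd e f) BZero -> beq S f e.
Proof.
by move=> ef0; rewrite -(beq_add0 f) -(beq_addss e) -beq_addA ef0 beq_addr0.
Qed.

Lemma q_diag x : beq S (BGen (q x x)) (BGen (q x (qm1 S))).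
Proof. by apply: beq_add_eq0; rewrite beq_link qQ1 beq_qzero. Qed.

Lemma q_gexpr n a b : beq S (bmuln (BGen (q a b)) n) (BGen (q a (gexp b n))).
Proof.
elim: n => [|n IHn]; first by rewrite /= /gexp /= q_x1 beq_qzero.
by rewrite /= IHn beq_link.
Qed.

Lemma q_gexpl n a b : beq S (BGen (q (gexp a n) b)) (bmuln (BGen (q a b)) n).
Proof. by rewrite qQ2 -q_gexpr qQ2. Qed.

Definition bspan T e := exists m : bitseq, beq S e (bsum (mask m T)).

Lemma bspan0 T : bspan T BZero.
Proof. by exists [::]. Qed.

Lemma bspan_beq T e f : bspan T e -> beq S e f -> bspan T f.
Proof. by move=> [m em] ef; exists m; rewrite -ef. Qed.

Lemma bspan_mem T e : List.In e T -> bspan T e.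
Proof.
elim: T => [//|t T IHT] /= [<-|/IHT [m em]].
- by exists [:: true]; rewrite /= beq_addr0.
- by exists (false :: m).
Qed.

Lemma bsum_mask_add T m1 m2 : exists m,
  beq S (BAdd (bsum (mask m1 T)) (bsum (mask m2 T))) (bsum (mask m T)).
Proof.
elim: T m1 m2 => [|t T IHT] m1 m2; first by exists [::]; rewrite !mask0 /= beq_add0.
case: m1 => [|b1 m1]; first by exists m2; rewrite beq_add0.
case: m2 => [|b2 m2]; first by exists (b1 :: m1); rewrite beq_addr0.
have [m sum_m] := IHT m1 m2.
case: b1; case: b2 => /=.
- by exists (false :: m); rewrite beq_addACA beq_addss beq_add0 sum_m.
- by exists (true :: m); rewrite -beq_addA sum_m.
- by exists (true :: m); rewrite beq_addA (beq_addC _ t) -beq_addA sum_m.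
- by exists (false :: m).
Qed.

Lemma bspan_add T e f : bspan T e -> bspan T f -> bspan T (BAdd e f).
Proof.
move=> [m1 em1] [m2 fm2]; have [m sum_m] := bsum_mask_add T m1 m2.
by exists m; rewrite em1 fm2.
Qed.

Inductive generated l : G -> Prop :=
| generated1 : generated l (qone S)
| generatedM x g : List.In x l -> generated l g -> generated l (qmul x g).

Lemma generated_mul l a b : generated l a -> generated l b -> generated l (qmul a b).
Proof.
elim=> [|x g lx _ IHg] lb; first by rewrite qmul1.
by rewrite -qmulA; apply: generatedM => //; apply: IHg.
Qed.

Lemma generated_mem l x : List.In x l -> generated l x.
Proof. by move=> lx; rewrite -(qmulr1 x); apply: generatedM lx (generated1 l). Qed.

Lemma generated_gprod l s :
  (forall x, List.In x s -> List.In x l) -> generated l (gprod s).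
Proof.
elim: s => [|y s IHs] sl /=; first exact: generated1.
by apply: generatedM; [apply: sl; left | apply: IHs => x sx; apply: sl; right].
Qed.

Lemma generated_sub l l' g :
  (forall x, List.In x l -> generated l' x) -> generated l g -> generated l' g.
Proof.
move=> ll'; elim=> [|x h lx _ IHh]; first exact: generated1.
exact: generated_mul (ll' _ lx) IHh.
Qed.

Lemma bspan_ql T l a b : generated l a ->
  (forall x, List.In x l -> bspan T (BGen (q x b))) -> bspan T (BGen (q a b)).
Proof.
move=> la lb; elim: la => [|x g lx _ IHg].
  by apply: (bspan_beq (bspan0 T)); rewrite q_1x beq_qzero.
by apply: (bspan_beq (bspan_add (lb x lx) IHg)); rewrite beq_linkl.
Qed.

Lemma bspan_q T l a b : generated l a -> generated l b ->
  (forall x y, List.In x l -> List.In y l -> bspan T (BGen (q x y))) ->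
  bspan T (BGen (q a b)).
Proof.
move=> la lb lT; apply: (bspan_ql la) => x lx; rewrite qQ2.
by apply: (bspan_ql lb) => y ly; apply: lT.
Qed.

Lemma bdim_le_generated l T :
  (forall g, generated l g) ->
  (forall x y, List.In x l -> List.In y l -> bspan T (BGen (q x y))) ->
  bdim_le S (size T).
Proof.
move=> l_gen lT; exists T; split=> //.
elim=> [z||e IHe f IHf|e IHe].
- by have [a [b <-]] := q_surj z; apply: bspan_q lT.
- exact: bspan0.
- exact: bspan_add.
- by apply: (bspan_beq IHe); rewrite beq_negE.
Qed.

Fixpoint qpairs s : seq B :=
  if s is x :: s' then map (fun y => BGen (q x y)) s' ++ qpairs s' else [::].

Lemma size_qpairs s : size (qpairs s) = 'C(size s, 2).
Proof. by elim: s => [//|x s IHs] /=; rewrite size_cat size_map IHs binS bin1 addnC. Qed.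

Lemma mem_qpairs s x y : List.In x s -> List.In y s ->
  [\/ x = y, List.In (BGen (q x y)) (qpairs s) | List.In (BGen (q y x)) (qpairs s)].
Proof.
have mem_head z t s' : List.In t s' -> List.In (BGen (q z t)) (qpairs (z :: s')).
  by move=> s't; apply: List.in_or_app; left; apply: List.in_map.
have mem_tail z s' e : List.In e (qpairs s') -> List.In e (qpairs (z :: s')).
  by move=> s'e; apply: List.in_or_app; right.
elim: s => [//|z s IHs] [<-|sx] [<-|sy]; first exact: Or31.
- by apply: Or32; apply: mem_head.
- by apply: Or33; apply: mem_head.
- by case: (IHs sx sy) => [|e|e]; [apply: Or31 | apply: Or32 | apply: Or33]; apply: mem_tail.
Qed.

Lemma bspan_qpairs T s :
  (forall x, List.In x s -> bspan (T ++ qpairs s) (BGen (q x x))) ->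
  forall x y, List.In x s -> List.In y s -> bspan (T ++ qpairs s) (BGen (q x y)).
Proof.
have in_pairs e : List.In e (qpairs s) -> bspan (T ++ qpairs s) e.
  by move=> se; apply/bspan_mem/List.in_or_app; right.
move=> diag x y sx sy; case: (mem_qpairs sx sy) => [<-|/in_pairs //|/in_pairs].
  exact: diag.
by rewrite qQ2.
Qed.

Lemma generated_basis s n :
  (forall g, exists m : bitseq, size m = n /\ g = gprod (mask m s)) ->
  forall g, generated s g.
Proof.
move=> s_spans g; have [m [_ ->]] := s_spans g.
by apply: generated_gprod => x; apply: In_mask.
Qed.

(* Exchange lemma: a basis vector occurring in the expansion of -1 can be replaced by -1. *)
Lemma has_order_generated_m1 n : has_order S n -> qm1 S <> qone S ->
  exists s, (size s).+1 = n /\ forall g, generated (qm1 S :: s) g.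
Proof.
move=> [s [size_s [s_spans _]]] m1_neq1; have s_gen := generated_basis s_spans.
have [m [_ m1E]] := s_spans (qm1 S).
have nz_mask : mask m s <> [::] by move=> m0; apply: m1_neq1; rewrite m1E m0.
have [s1 [z [s2 [m2 [sE maskE]]]]] := mask_first nz_mask.
exists (s1 ++ s2); split; first by rewrite -size_s sE !size_cat addnS.
move=> g; apply: generated_sub (s_gen g) => x; rewrite sE => sx.
case: (List.in_app_or _ _ _ sx) => [s1x|[<-|s2x]].
- by apply: generated_mem; right; apply: List.in_or_app; left.
- have -> : z = qmul (qm1 S) (gprod (mask m2 s2)).
    by rewrite m1E maskE /= -qmulA qmulxx qmulr1.
  apply: generated_mul; first by apply: generated_mem; left.
  apply: generated_gprod => y m2y.
  by right; apply: List.in_or_app; right; apply: In_mask m2y.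
- by apply: generated_mem; right; apply: List.in_or_app; right.
Qed.

End BrauerGroup.

Theorem lemma4 (S : qstruct) :
  ((forall e : bexpr (qQ S), beq S (BAdd e e) BZero) /\
   qzero S = q (qone S) (qone S) /\ beq S (BGen (qzero S)) BZero) /\
  (forall (alpha : nat) (a b : qG S),
     beq S (BGen (q (gexp a alpha) b)) (bmuln (BGen (q a b)) alpha) /\
     beq S (bmuln (BGen (q a b)) alpha) (BGen (q a (gexp b alpha)))) /\
  (forall n : nat, has_order S n ->
     (qm1 S = qone S -> bdim_le S 'C(n, 2)) /\
     (qm1 S <> qone S -> bdim_le S ('C(n, 2) + 1))).
Proof.
split; first by split; [exact: beq_addss | rewrite q_x1; split; [|exact: beq_qzero]].
split; first by move=> alpha a b; split; [exact: q_gexpl | exact: q_gexpr].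
move=> n ordS; split=> [m1E|m1_neq1].
- have [s [size_s [s_spans _]]] := ordS.
  rewrite -size_s -size_qpairs; apply: (bdim_le_generated (generated_basis s_spans)).
  apply: (bspan_qpairs (T := [::])) => x _.
  by apply: (bspan_beq (bspan0 _)); rewrite q_diag m1E q_x1 beq_qzero.
- have [s [size_s s_gen]] := has_order_generated_m1 ordS m1_neq1.
  set T := [:: BGen (q (qm1 S) (qm1 S))].
  have -> : 'C(n, 2) + 1 = size (T ++ qpairs (qm1 S :: s)).
    by rewrite size_cat size_qpairs /= size_s addnC.
  apply: (bdim_le_generated s_gen); apply: bspan_qpairs => x [<-|sx].
    by apply: bspan_mem; left.
  apply: (@bspan_beq _ _ (BGen (q (qm1 S) x))); last by rewrite q_diag qQ2.
  by apply: bspan_mem; right; apply: List.in_or_app; left; apply: List.in_map.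
Qed.
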